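(* Let $G,H,K,L$ be graphs with $G\mid K$ and $H\mid L$. If $K$ and $L$ are strongly disjoint, then $G$ and $H$ are strongly disjoint. If $K$ and $L$ are weakly disjoint, then $G$ and $H$ are weakly disjoint.
   Context: A weight function on finite $U$ is $\alpha:U\times U\to\mathbb{R}$, $\alpha\ge0$, symmetric, summing to $1$; degree $p(u)=\sum_{u'}\alpha(u,u')$; a graph is $(U,\alpha)$. For graphs $G=(U,\alpha)$, $H=(V,\beta)$ with degrees $p,q$, $H\mid G$ means there is a surjective $\phi:U\to V$ with (i) $q(v)=\sum_{u\in\phi^{-1}(v)}p(u)$ for all $v$, and (ii) $q(v)\sum_{u'\in\phi^{-1}(v')}\alpha(u,u')=p(u)\beta(v,v')$ for all $v,v'$, $u\in\phi^{-1}(v)$. A weight joining of $\alpha,\beta$ is a weight function $\gamma$ on $U\times V$ with degree $r(u,v)=\sum_{(u',v')}\gamma((u,v),(u',v'))$ such that $\sum_v r(u,v)=p(u)$, $\sum_u r(u,v)=q(v)$, $p(u)\sum_{\tilde v}\gamma((u,v),(u',\tilde v))=\alpha(u,u')r(u,v)$ and $q(v)\sum_{\tilde u}\gamma((u,v),(\tilde u,v'))=\beta(v,v')r(u,v)$ for all $u,u',v,v'$. Graphs $(U,\alpha),(V,\beta)$ are strongly disjoint if the only weight joining is $\alpha\otimes\beta$, $(\alpha\otimes\beta)((u,v),(u',v'))=\alpha(u,u')\beta(v,v')$; weakly disjoint if every weight joining has degree $r(u,v)=p(u)q(v)$. *)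

From HB Require Import structures.
From mathcomp Require Import all_boot all_order all_algebra.
Set Implicit Arguments. Unset Strict Implicit. Unset Printing Implicit Defensive.
Import Order.TTheory GRing.Theory Num.Theory.
Local Open Scope ring_scope.

Section Graphs.
Variable R : realFieldType.

Definition is_weight (U : finType) (alpha : U -> U -> R) : Prop :=
  [/\ forall u u', 0 <= alpha u u',
      forall u u', alpha u u' = alpha u' u
    & \sum_(u : U) \sum_(u' : U) alpha u u' = 1].

Definition deg (U : finType) (alpha : U -> U -> R) (u : U) : R :=
  \sum_(u' : U) alpha u u'.

(* gdiv alpha beta : (V,beta) | (U,alpha), i.e. H | G with G=(U,alpha), H=(V,beta) *)
Definition gdiv (U V : finType) (alpha : U -> U -> R) (beta : V -> V -> R) : Prop :=
  exists phi : U -> V,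
    [/\ forall v : V, exists u : U, phi u = v,
        forall v : V, deg beta v = \sum_(u | phi u == v) deg alpha u
      & forall (v v' : V) (u : U), phi u = v ->
          deg beta v * (\sum_(u' | phi u' == v') alpha u u')
          = deg alpha u * beta v v'].

Definition tensorw (U V : finType) (alpha : U -> U -> R) (beta : V -> V -> R)
  (x y : U * V) : R := alpha x.1 y.1 * beta x.2 y.2.

Definition weight_joining (U V : finType) (alpha : U -> U -> R) (beta : V -> V -> R)
  (gamma : U * V -> U * V -> R) : Prop :=
  [/\ is_weight gamma,
      forall u : U, \sum_(v : V) deg gamma (u, v) = deg alpha u,
      forall v : V, \sum_(u : U) deg gamma (u, v) = deg beta v,
      forall (u u' : U) (v : V),
        deg alpha u * (\sum_(vt : V) gamma (u, v) (u', vt)) = alpha u u' * deg gamma (u, v)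
    & forall (u : U) (v v' : V),
        deg beta v * (\sum_(ut : U) gamma (u, v) (ut, v')) = beta v v' * deg gamma (u, v)].

Definition strongly_disjoint (U V : finType) (alpha : U -> U -> R) (beta : V -> V -> R) : Prop :=
  forall gamma, weight_joining alpha beta gamma -> forall x y, gamma x y = tensorw alpha beta x y.

Definition weakly_disjoint (U V : finType) (alpha : U -> U -> R) (beta : V -> V -> R) : Prop :=
  forall gamma, weight_joining alpha beta gamma ->
    forall (u : U) (v : V), deg gamma (u, v) = deg alpha u * deg beta v.

End Graphs.

From mathcomp Require Import all_boot all_order all_algebra.
From mathcomp Require Import ring.
Set Implicit Arguments. Unset Strict Implicit. Unset Printing Implicit Defensive.
Import Order.TTheory GRing.Theory Num.Theory.
Local Open Scope ring_scope.

(* A joining [gamma] of [(G, a)] and [(H, b)] lifts along a factor map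
   [phi : K -> G] from [(K, c)] to the joining
     ((k, h), (k', h')) |-> gamma ((phi k, h), (phi k', h')) * c k k' / a (phi k) (phi k')
   of [(K, c)] and [(H, b)], and summing the lift over the fibres of [phi] gives
   back [gamma] and its degree.  Hence if every joining of [K] and [H] is the
   product (resp. has product degree), so is every joining of [G] and [H].  Both
   disjointness notions are symmetric, so the two factor maps are handled one at a
   time. *)

Lemma sum_pair (M : nmodType) (I J : finType) (F : I * J -> M) :
  \sum_p F p = \sum_i \sum_j F (i, j).
Proof. by rewrite pair_bigA; apply: eq_bigr => -[]. Qed.

Lemma sum_swap_pair (M : nmodType) (I J : finType) (F : I * J -> M) :
  \sum_(p : J * I) F (swap_pair p) = \sum_p F p.
Proof. by rewrite !sum_pair exchange_big. Qed.

Lemma sum_partition (M : nmodType) (I J : finType) (p : I -> J) (F : I -> M) :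
  \sum_i F i = \sum_j \sum_(i | p i == j) F i.
Proof. exact: partition_big. Qed.

Section WeightFunction.
Variables (R : realFieldType) (U : finType) (alpha : U -> U -> R).
Hypothesis Walpha : is_weight alpha.

Lemma weight_ge0 u u' : 0 <= alpha u u'.
Proof. by case: Walpha. Qed.

Lemma deg_ge0 u : 0 <= deg alpha u.
Proof. by apply: sumr_ge0 => u' _; apply: weight_ge0. Qed.

Lemma deg_eq0_weight u u' : deg alpha u = 0 -> alpha u u' = 0.
Proof. by move/psumr_eq0P; apply=> // u'' _; apply: weight_ge0. Qed.

End WeightFunction.

Section Joining.
Variables (R : realFieldType) (U V : finType) (alpha : U -> U -> R) (beta : V -> V -> R).
Variable gamma : U * V -> U * V -> R.
Hypothesis Jgamma : weight_joining alpha beta gamma.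

Let Wgamma : is_weight gamma. Proof. by case: Jgamma. Qed.

Lemma joining_ge0 x y : 0 <= gamma x y.
Proof. exact: weight_ge0. Qed.

Lemma deg_joining_eq0 u v : deg alpha u = 0 -> deg gamma (u, v) = 0.
Proof.
case: Jgamma => _ margin _ _ _; rewrite -margin => /psumr_eq0P; apply=> // v' _.
exact: deg_ge0.
Qed.

Lemma joining_eq0 u u' v v' : alpha u u' = 0 -> gamma (u, v) (u', v') = 0.
Proof.
move=> alpha0.
have [/(deg_joining_eq0 v)/deg_eq0_weight->//|deg_neq0] := eqVneq (deg alpha u) 0.
case: Jgamma => _ _ _ transition _; move/eqP: (transition u u' v).
rewrite alpha0 mul0r mulf_eq0 (negbTE deg_neq0) /= => /eqP/psumr_eq0P-> // v'' _.
exact: joining_ge0.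
Qed.

Lemma joining_divfK u v y : gamma (u, v) y / deg alpha u * deg alpha u = gamma (u, v) y.
Proof.
have [/(deg_joining_eq0 v)/deg_eq0_weight->//|/divfK//] := eqVneq (deg alpha u) 0.
by rewrite !mul0r.
Qed.

Lemma deg_joining_divfK u v : deg gamma (u, v) / deg alpha u * deg alpha u = deg gamma (u, v).
Proof.
have [/(deg_joining_eq0 v)->//|/divfK//] := eqVneq (deg alpha u) 0.
by rewrite !mul0r.
Qed.

End Joining.

Section Swap.
Variables (R : realFieldType) (U V : finType).

Definition swap_weight (gamma : U * V -> U * V -> R) (x y : V * U) : R :=
  gamma (swap_pair x) (swap_pair y).

Lemma deg_swap_weight gamma u v : deg (swap_weight gamma) (v, u) = deg gamma (u, v).
Proof. exact: sum_swap_pair. Qed.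

Lemma weight_joining_swap alpha beta gamma :
  weight_joining alpha beta gamma -> weight_joining beta alpha (swap_weight gamma).
Proof.
case=> -[ge0 sym total] marginl marginr transl transr; split.
- split=> [x y|x y|]; first exact: ge0; first by rewrite /swap_weight sym.
  rewrite -total -(sum_swap_pair (fun x => \sum_y gamma x y)).
  by apply: eq_bigr => x _; apply: (sum_swap_pair (gamma (swap_pair x))).
- by move=> v; rewrite -marginr; apply: eq_bigr => u _; rewrite deg_swap_weight.
- by move=> u; rewrite -marginl; apply: eq_bigr => v _; rewrite deg_swap_weight.
- by move=> v v' u; rewrite deg_swap_weight transr.
- by move=> v u u'; rewrite deg_swap_weight transl.
Qed.

End Swap.

Lemma strongly_disjoint_sym (R : realFieldType) (U V : finType)
    (alpha : U -> U -> R) (beta : V -> V -> R) :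
  strongly_disjoint alpha beta -> strongly_disjoint beta alpha.
Proof.
move=> disj gamma /weight_joining_swap/disj gammaE [v u] [v' u'].
by rewrite /tensorw /= mulrC; apply: (gammaE (u, v) (u', v')).
Qed.

Lemma weakly_disjoint_sym (R : realFieldType) (U V : finType)
    (alpha : U -> U -> R) (beta : V -> V -> R) :
  weakly_disjoint alpha beta -> weakly_disjoint beta alpha.
Proof.
move=> disj gamma /weight_joining_swap/disj degE v u.
by rewrite mulrC -degE deg_swap_weight.
Qed.

Section FactorMap.
Variables (R : realFieldType) (U V : finType) (alpha : U -> U -> R) (beta : V -> V -> R).
Variable phi : U -> V.
Hypotheses (Walpha : is_weight alpha) (Wbeta : is_weight beta).
Hypothesis deg_factor : forall v, deg beta v = \sum_(u | phi u == v) deg alpha u.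
Hypothesis transition_factor : forall v v' u, phi u = v ->
  deg beta v * (\sum_(u' | phi u' == v') alpha u u') = deg alpha u * beta v v'.

Lemma deg_eq0_factor u : deg beta (phi u) = 0 -> deg alpha u = 0.
Proof. by rewrite deg_factor => /psumr_eq0P; apply=> // u' _; apply: deg_ge0. Qed.

Lemma sum_fiber_weight u v' :
  \sum_(u' | phi u' == v') alpha u u' = deg alpha u * beta (phi u) v' / deg beta (phi u).
Proof.
have [deg0|deg_neq0] := eqVneq (deg beta (phi u)) 0.
  rewrite deg0 invr0 mulr0; apply: big1 => u' _.
  exact/deg_eq0_weight/deg_eq0_factor.
by rewrite -(transition_factor v' (erefl _)) [deg beta _ * _]mulrC mulfK.
Qed.

Lemma weight_eq0_factor u u' : beta (phi u) (phi u') = 0 -> alpha u u' = 0.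
Proof.
move=> beta0; have : \sum_(u'' | phi u'' == phi u') alpha u u'' = 0.
  by rewrite sum_fiber_weight beta0 mulr0 mul0r.
by move/psumr_eq0P; apply=> // u'' _; apply: weight_ge0.
Qed.

Lemma sum_fibers_weight v v' :
  \sum_(u | phi u == v) \sum_(u' | phi u' == v') alpha u u' = beta v v'.
Proof.
rewrite (eq_bigr (fun u => deg alpha u * (beta v v' / deg beta v))); last first.
  by move=> u /eqP <-; rewrite sum_fiber_weight mulrA.
rewrite -big_distrl /= -deg_factor.
have [deg0|deg_neq0] := eqVneq (deg beta v) 0; last by rewrite mulrCA mulfV ?mulr1.
by rewrite deg0 mul0r deg_eq0_weight.
Qed.

End FactorMap.

Section Lift.
Variables (R : realFieldType) (K G H : finType).
Variables (c : K -> K -> R) (a : G -> G -> R) (b : H -> H -> R) (phi : K -> G).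
Variable gamma : G * H -> G * H -> R.
Hypotheses (Wc : is_weight c) (Wa : is_weight a).
Hypothesis deg_factor : forall g, deg a g = \sum_(k | phi k == g) deg c k.
Hypothesis transition_factor : forall g g' k, phi k = g ->
  deg a g * (\sum_(k' | phi k' == g') c k k') = deg c k * a g g'.
Hypothesis Jgamma : weight_joining a b gamma.

(* Where [a] vanishes so does [gamma], so the junk value [x / 0 = 0] is harmless. *)
Definition lift_joining (x y : K * H) : R :=
  gamma (phi x.1, x.2) (phi y.1, y.2) * (c x.1 y.1 / a (phi x.1) (phi y.1)).

Lemma sum_fiber_lift k h g' h' :
  \sum_(k' | phi k' == g') lift_joining (k, h) (k', h') =
  gamma (phi k, h) (g', h') * (deg c k / deg a (phi k)).
Proof.
rewrite (eq_bigr (fun k' => gamma (phi k, h) (g', h') * (c k k' / a (phi k) g'))); last first.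
  by move=> k' /eqP <-.
rewrite -big_distrr -big_distrl /=.
have [a0|a_neq0] := eqVneq (a (phi k) g') 0; first by rewrite (joining_eq0 Jgamma) ?mul0r.
by rewrite (sum_fiber_weight Wc deg_factor transition_factor) mulrAC mulfK.
Qed.

Lemma sum_lift_left k h h' :
  \sum_k' lift_joining (k, h) (k', h') =
  (\sum_g' gamma (phi k, h) (g', h')) * (deg c k / deg a (phi k)).
Proof.
rewrite (sum_partition phi) big_distrl; apply: eq_bigr => g' _; exact: sum_fiber_lift.
Qed.

Lemma deg_lift k h :
  deg lift_joining (k, h) = deg gamma (phi k, h) * (deg c k / deg a (phi k)).
Proof.
rewrite /deg !sum_pair exchange_big [in RHS]exchange_big big_distrl /=.
by apply: eq_bigr => h' _; apply: sum_lift_left.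
Qed.

Lemma sum_fiber_deg_lift g h :
  \sum_(k | phi k == g) deg lift_joining (k, h) = deg gamma (g, h).
Proof.
rewrite (eq_bigr (fun k => deg gamma (g, h) / deg a g * deg c k)); last first.
  by move=> k /eqP <-; rewrite deg_lift mulrA mulrAC.
by rewrite -big_distrr /= -deg_factor (deg_joining_divfK Jgamma).
Qed.

Lemma sum_fibers_lift g g' h h' :
  \sum_(k | phi k == g) \sum_(k' | phi k' == g') lift_joining (k, h) (k', h') =
  gamma (g, h) (g', h').
Proof.
rewrite (eq_bigr (fun k => gamma (g, h) (g', h') / deg a g * deg c k)); last first.
  by move=> k /eqP <-; rewrite sum_fiber_lift mulrA mulrAC.
by rewrite -big_distrr /= -deg_factor (joining_divfK Jgamma).
Qed.

Lemma lift_weight_joining : weight_joining c b lift_joining.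
Proof.
case: Wc => _ c_sym c_total; case: Wa => _ a_sym _.
case: Jgamma => -[_ gamma_sym _] marginl marginr transl transr.
have margin_lift_l k : \sum_h deg lift_joining (k, h) = deg c k.
  under eq_bigr do rewrite deg_lift.
  rewrite -big_distrl /= marginl mulrCA.
  have [/(deg_eq0_factor Wc deg_factor)->|/mulfV->] := eqVneq (deg a (phi k)) 0.
    by rewrite !mul0r.
  exact: mulr1.
split.
- split=> [x y|x y|].
  + apply: mulr_ge0; first exact: (joining_ge0 Jgamma (_, _) (_, _)).
    by apply: divr_ge0; apply: weight_ge0.
  + by rewrite /lift_joining gamma_sym c_sym a_sym.
  + rewrite -c_total sum_pair; apply: eq_bigr => k _; exact: margin_lift_l.
- exact: margin_lift_l.
- move=> h; rewrite (sum_partition phi) -marginr.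
  by apply: eq_bigr => g _; apply: sum_fiber_deg_lift.
- move=> k k' h; rewrite deg_lift /lift_joining /= -big_distrl /=.
  have [c0|c_neq0] := eqVneq (c k k') 0; first by rewrite c0 !(mul0r, mulr0).
  have a_neq0 : a (phi k) (phi k') != 0.
    by apply: contra_neq c_neq0 => /(weight_eq0_factor Wc deg_factor transition_factor).
  have deg_neq0 : deg a (phi k) != 0.
    by apply: contra_neq c_neq0 => /(deg_eq0_factor Wc deg_factor)/deg_eq0_weight->.
  move/(canRL (mulKf deg_neq0)): (transl (phi k) (phi k') h) => ->.
  by field; rewrite deg_neq0 a_neq0.
- by move=> k h h'; rewrite sum_lift_left deg_lift mulrA transr -mulrA.
Qed.

End Lift.

Section FactorDisjointness.
Variables (R : realFieldType) (K G H : finType).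
Variables (c : K -> K -> R) (a : G -> G -> R) (b : H -> H -> R).
Hypotheses (Wc : is_weight c) (Wa : is_weight a) (a_div_c : gdiv c a).

Lemma strongly_disjoint_factor : strongly_disjoint c b -> strongly_disjoint a b.
Proof.
case: a_div_c => phi [_ deg_factor transition_factor] disj gamma Jgamma [g h] [g' h'].
have := lift_weight_joining Wc Wa deg_factor transition_factor Jgamma.
move/disj=> liftE; rewrite -(sum_fibers_lift Wc deg_factor transition_factor Jgamma).
rewrite /tensorw /= -(sum_fibers_weight Wc Wa deg_factor transition_factor) big_distrl.
apply: eq_bigr => k _; rewrite big_distrl; apply: eq_bigr => k' _; exact: liftE.
Qed.

Lemma weakly_disjoint_factor : weakly_disjoint c b -> weakly_disjoint a b.
Proof.
case: a_div_c => phi [_ deg_factor transition_factor] disj gamma Jgamma g h.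
have := lift_weight_joining Wc Wa deg_factor transition_factor Jgamma.
move/disj=> degE; rewrite -(sum_fiber_deg_lift Wc deg_factor transition_factor Jgamma).
by rewrite deg_factor big_distrl; apply: eq_bigr => k _; apply: degE.
Qed.

End FactorDisjointness.

Theorem proposition4p4 (R : realFieldType) (UG UH UK UL : finType)
  (a : UG -> UG -> R) (b : UH -> UH -> R) (c : UK -> UK -> R) (d : UL -> UL -> R) :
  is_weight a -> is_weight b -> is_weight c -> is_weight d ->
  gdiv c a -> gdiv d b ->
  (strongly_disjoint c d -> strongly_disjoint a b) /\
  (weakly_disjoint c d -> weakly_disjoint a b).
Proof.
move=> Wa Wb Wc Wd a_div_c b_div_d; split=> [disj|disj].
- apply/strongly_disjoint_sym/(strongly_disjoint_factor Wd Wb b_div_d).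
  exact/strongly_disjoint_sym/(strongly_disjoint_factor Wc Wa a_div_c).
- apply/weakly_disjoint_sym/(weakly_disjoint_factor Wd Wb b_div_d).
  exact/weakly_disjoint_sym/(weakly_disjoint_factor Wc Wa a_div_c).
Qed.
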